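(* Uniformly for all real $\alpha\geqslant 3$ and $x>1$, $$\sum_{p\leqslant x}\frac{1}{(\log p)^\alpha}<(2\alpha)^\alpha\frac{x}{(\log x)^{\alpha+1}},$$ where the sum runs over primes $p$. *)

From Stdlib Require Import Reals List.
From mathcomp Require Import ssreflect ssrbool ssrnat prime.
Open Scope R_scope.

(* Sum of f p over all primes p with p <= x (p a natural number, x real).
   Every such p lies in [0, up x], since up x > x. *)
Definition sum_primes_le (x : R) (f : nat -> R) : R :=
  fold_right Rplus 0
    (map f (filter (fun n : nat => prime n && (if Rle_dec (INR n) x then true else false))
                   (seq 0 (S (Z.to_nat (up x)))))).

(* Split the primes at y = x^(2/5).  A prime p <= y contributes at most
   (log 2)^-alpha and there are at most y of them.  A prime p > y satisfies
   (log p)^-alpha <= log p / (log y)^(alpha+1), and Chebyshev's bound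
   sum_(p <= x) log p <= x log 4 controls their total; it follows from
   prod_(p <= n) p <= 4^n, because the primes in (m+1, 2m+1] divide
   binomial(2m+1, m) <= 4^m.  Compared in logarithmic scale, the two pieces are
   at most 0.68 and 0.26 times the right-hand side once alpha >= 3. *)

From Stdlib Require Import Reals Lra Lia List ZArith.
From mathcomp Require all_boot zify.
From mathcomp Require Import ssreflect ssrbool prime.

(* A module, so that MathComp's nat notations do not leak into the real
   arithmetic below. *)
Module Primorial.
Import all_boot zify.
Local Open Scope nat_scope.

Definition primorial n := \prod_(0 <= p < n.+1 | prime p) p.

Lemma prime_dvd_fact_leq p n : prime p -> p %| n`! -> p <= n.
Proof.
move=> p_pr; elim: n => [|n IHn]; first by rewrite dvdn1 => /eqP p1; rewrite p1 in p_pr.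
rewrite factS Euclid_dvdM // => /orP[/(dvdn_leq (ltn0Sn n)) // | /IHn]; exact: leqW.
Qed.

Lemma sum_bin n : \sum_(0 <= i < n.+1) 'C(n, i) = 2 ^ n.
Proof.
rewrite big_mkord -[2]/(1 + 1) expnDn; apply: eq_bigr => i _.
by rewrite !exp1n !muln1.
Qed.

Lemma bin_mid_leq m : 'C(m.*2.+1, m) <= 4 ^ m.
Proof.
have bin_sym : 'C(m.*2.+1, m.+1) = 'C(m.*2.+1, m).
  by rewrite -[in RHS]bin_sub ?subSn -?addnn ?addnK //; lia.
have : 'C(m.*2.+1, m) + 'C(m.*2.+1, m.+1) <= 2 ^ m.*2.+1.
  rewrite -sum_bin (big_cat_nat (n := m)) ?(big_ltn (m := m)) ?(big_ltn (m := m.+1));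
  by rewrite -?addnn //=; lia.
by rewrite bin_sym addnn expnS -mul2n leq_pmul2l // -mul2n expnM.
Qed.

Lemma prod_primes_dvd_bin m :
  \prod_(m.+2 <= p < m.*2.+2 | prime p) p %| 'C(m.*2.+1, m).
Proof.
have bin_mul_fact : 'C(m.*2.+1, m) * m`! = \prod_(m.+2 <= k < m.*2.+2) k.
  have sub_m : m.*2.+1 - m = m.+1 by rewrite -addnn; lia.
  apply/eqP; rewrite -(eqn_pmul2l (fact_gt0 m.+1)) mulnCA -fact_split;
    last by rewrite -addnn; lia.
  by rewrite [_`! * _]mulnC -sub_m bin_fact // -addnn; lia.
have coprime_fact : coprime (\prod_(m.+2 <= p < m.*2.+2 | prime p) p) m`!.
  rewrite big_nat_cond; apply: (big_ind (coprime^~ m`!)) => [|a b|p].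
  - exact: coprime1n.
  - by rewrite coprimeMl => -> ->.
  move=> /andP[/andP[lt_m1p _] p_pr]; rewrite prime_coprime //.
  by apply/negP => /(prime_dvd_fact_leq _ _ p_pr); lia.
rewrite -(Gauss_dvdl _ coprime_fact) bin_mul_fact [X in _ %| X](bigID prime) /=.
exact: dvdn_mulr.
Qed.

Lemma primorial_leq n : primorial n <= 4 ^ n.
Proof.
elim/ltn_ind: n => -[|[|[|n]]] IHn; try by rewrite /primorial unlock.
have [odd_n | even_n] := boolP (odd n.+3).
- pose m := n.+3./2.
  have def_n : n.+3 = m.*2.+1 by rewrite -[LHS]odd_double_half odd_n.
  have lt_m1n : m.+1 < n.+3 by rewrite def_n -addnn; lia.
  rewrite {1}/primorial def_n (big_cat_nat (n := m.+2)) //=; last by rewrite -addnn; lia.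
  have -> : 4 ^ m.*2.+1 = 4 ^ m.+1 * 4 ^ m by rewrite -expnD -addnn addSn.
  rewrite leq_mul ?(IHn _ lt_m1n) //.
  apply: leq_trans (bin_mid_leq m); apply: dvdn_leq (prod_primes_dvd_bin m).
  by rewrite bin_gt0 -addnn; lia.
- have not_pr : ~~ prime n.+3 by apply: contra even_n => /even_prime[].
  rewrite /primorial big_mkcond big_nat_recr //= (negbTE not_pr) muln1 -big_mkcond.
  by apply: leq_trans (IHn n.+2 _) _; rewrite ?leq_exp2l.
Qed.

Lemma primorial_fold_right n :
  primorial n = List.fold_right Nat.mul 1 (List.filter prime (List.seq 0 n.+1)).
Proof.
have seq_iota k : List.seq 0 k = index_iota 0 k.
  by rewrite /index_iota subn0; elim: k 0 => //= k IHk j; rewrite IHk.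
rewrite /primorial -seq_iota; elim: (List.seq 0 n.+1) => [|p s IHs]; first by rewrite big_nil.
by rewrite big_cons /=; case: (prime p); rewrite IHs.
Qed.

Lemma prod_primes_le_pow4 n :
  (List.fold_right Nat.mul 1 (List.filter prime (List.seq 0 n.+1)) <= Nat.pow 4 n)%coq_nat.
Proof.
have expn_pow k : 4 ^ k = Nat.pow 4 k by elim: k => // k IHk; rewrite expnS IHk.
by apply/leP; rewrite -primorial_fold_right -expn_pow primorial_leq.
Qed.
End Primorial.

Open Scope R_scope.

Lemma ln_le x y : 0 < x -> x <= y -> ln x <= ln y.
Proof. by move=> x_pos [lt_xy | ->]; [left; apply: ln_increasing | right]. Qed.

Lemma ln_le_sub1 x : 0 < x -> ln x <= x - 1.
Proof. by move=> x_pos; have := exp_ineq1_le (ln x); rewrite exp_ln //; lra. Qed.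

Lemma exp_le x y : x <= y -> exp x <= exp y.
Proof. by move=> [lt_xy | ->]; [left; apply: exp_increasing | right]. Qed.

Lemma mul_ln_le k s : 0 < k -> 0 < s -> k * ln s <= s - k + k * ln k.
Proof.
move=> k_pos s_pos; have := ln_le_sub1 (s / k) ltac:(exact: Rdiv_lt_0_compat).
rewrite /Rdiv ln_mult ?ln_Rinv; try apply: Rinv_0_lt_compat; try lra.
move=> le_sk; have := Rmult_le_compat_l k _ _ (Rlt_le _ _ k_pos) le_sk.
have -> : k * (s * / k - 1) = s - k by field; lra.
lra.
Qed.

Lemma exp_le_mul_exp c u v : 0 < c -> u - v <= ln c -> exp u <= c * exp v.
Proof.
by move=> c_pos le_uv; rewrite -[c]exp_ln // -exp_plus; apply: exp_le; lra.
Qed.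

Lemma pow_le_exp t n : (0 < n)%nat -> - INR n <= t -> (1 + t / INR n) ^ n <= exp t.
Proof.
move=> n_pos t_ge; have n_gt0 : 0 < INR n by apply: lt_0_INR; lia.
have -> : exp t = exp (t / INR n) ^ n.
  rewrite -Rpower_pow; last exact: exp_pos.
  by rewrite /Rpower ln_exp; f_equal; field; lra.
apply: pow_incr; split; last exact: exp_ineq1_le.
have -> : 1 + t / INR n = (INR n + t) * / INR n by field; lra.
by apply: Rmult_le_pos; [lra | left; apply: Rinv_0_lt_compat].
Qed.

Lemma ln_le_of_pow c t n : (0 < n)%nat -> - INR n <= t -> 0 < c ->
  c <= (1 + t / INR n) ^ n -> ln c <= t.
Proof.
move=> n_pos t_ge c_pos c_le; rewrite -[t]ln_exp; apply: ln_le => //.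
by apply: Rle_trans c_le (pow_le_exp _ _ n_pos t_ge).
Qed.

Lemma le_ln_of_pow c t n : (0 < n)%nat -> t <= INR n -> 0 < c ->
  1 <= c * (1 - t / INR n) ^ n -> t <= ln c.
Proof.
move=> n_pos t_le c_pos c_ge.
have pow_le : (1 - t / INR n) ^ n <= / exp t.
  rewrite -exp_Ropp; have -> : 1 - t / INR n = 1 + - t / INR n by rewrite /Rdiv; ring.
  by apply: pow_le_exp => //; lra.
have exp_t_pos := exp_pos t; have exp_inv := Rinv_r _ (exp_neq_0 t).
have inv_ge : 1 <= c * / exp t.
  by apply: Rle_trans c_ge _; apply: Rmult_le_compat_l; lra.
rewrite -[t]ln_exp; apply: ln_le => //; nra.
Qed.

Lemma ln2_bounds : 0.69 <= ln 2 <= 0.7.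
Proof.
split.
- by apply: (le_ln_of_pow _ _ 128); rewrite ?INR_IZR_INZ /=; lra || lia.
- by apply: (ln_le_of_pow _ _ 64); rewrite ?INR_IZR_INZ /=; lra || lia.
Qed.

Lemma ln_4 : ln 4 = 2 * ln 2.
Proof. by rewrite (_ : 4 = 2 * 2) ?ln_mult; lra. Qed.

Lemma ln_3_5_ge : -0.53 <= ln (3/5).
Proof. by apply: (le_ln_of_pow _ _ 64); rewrite ?INR_IZR_INZ /=; lra || lia. Qed.

Lemma ln_ln2_ge : -0.38 <= ln (ln 2).
Proof.
have [l2_ge _] := ln2_bounds.
by apply: (le_ln_of_pow _ _ 64); rewrite ?INR_IZR_INZ /=; lra || lia.
Qed.

Lemma ln_0_68_ge : -0.4 <= ln 0.68.
Proof. by apply: (le_ln_of_pow _ _ 64); rewrite ?INR_IZR_INZ /=; lra || lia. Qed.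

Definition Rsum_list (f : nat -> R) (l : list nat) : R := fold_right Rplus 0 (map f l).

Lemma Rsum_list_nil f : Rsum_list f nil = 0.
Proof. by []. Qed.

Lemma Rsum_list_cons f n l : Rsum_list f (n :: l) = f n + Rsum_list f l.
Proof. by []. Qed.

Lemma Rsum_list_app f l1 l2 : Rsum_list f (l1 ++ l2) = Rsum_list f l1 + Rsum_list f l2.
Proof.
elim: l1 => [|n l1 IH]; first by rewrite Rplus_0_l.
by rewrite -app_comm_cons !Rsum_list_cons IH Rplus_assoc.
Qed.

Lemma Rsum_list_le f g l : (forall n, In n l -> f n <= g n) -> Rsum_list f l <= Rsum_list g l.
Proof.
elim: l => [|n l IH] le_fg; first by right.
rewrite !Rsum_list_cons; apply: Rplus_le_compat; first by apply: le_fg; left.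
by apply: IH => m l_m; apply: le_fg; right.
Qed.

Lemma Rsum_list_lin c d f g l :
  Rsum_list (fun n => c * f n + d * g n) l = c * Rsum_list f l + d * Rsum_list g l.
Proof.
elim: l => [|n l IH]; first by rewrite /Rsum_list /=; ring.
by rewrite !Rsum_list_cons IH; ring.
Qed.

Lemma Rsum_list_indicator_le (P : nat -> bool) y k :
  0 <= y -> (forall n, P n -> (0 < n)%nat) ->
  Rsum_list (fun n => if Rle_dec (INR n) y then 1 else 0) (filter P (seq 0 k)) <= y.
Proof.
move=> y_ge0 P_pos; set ind := fun n => if Rle_dec (INR n) y then 1 else 0.
(* Distinct positive integers below k are at most k - 1 in number. *)
suff bounds : Rsum_list ind (filter P (seq 0 k)) <= y /\
              Rsum_list ind (filter P (seq 0 k)) <= INR (Nat.pred k).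
  exact: proj1 bounds.
elim: k => [|k [IHy IHk]]; first by rewrite Rsum_list_nil /=; split; lra.
have pred_le : INR (Nat.pred k) <= INR k by apply: le_INR; lia.
rewrite seq_S filter_app Rsum_list_app /=.
case Pk : (P k); rewrite ?Rsum_list_cons Rsum_list_nil; last by split; lra.
have pred_k : INR (Nat.pred k) = INR k - 1.
  by rewrite -[in INR k](Nat.succ_pred_pos k (P_pos k Pk)) S_INR; lra.
by rewrite [ind k]/ind; case: Rle_dec => /= k_y; split; lra.
Qed.

Lemma exp_Rsum_list_ln l : (forall n, In n l -> (0 < n)%nat) ->
  exp (Rsum_list (fun n => ln (INR n)) l) = INR (fold_right Nat.mul 1%nat l).
Proof.
elim: l => [|n l IH] l_pos; first exact: exp_0.
have n_pos : 0 < INR n by apply: lt_0_INR; apply: l_pos; left.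
rewrite Rsum_list_cons exp_plus exp_ln // IH /= ?mult_INR //.
by move=> m l_m; apply: l_pos; right.
Qed.

Definition primes_below (N : nat) : list nat := filter prime (seq 0 N).

Lemma Rsum_list_ln_primes_below_le N :
  Rsum_list (fun p => ln (INR p)) (primes_below N) <= INR (Nat.pred N) * ln 4.
Proof.
case: N => [|n]; first by rewrite Rsum_list_nil /=; lra.
have primes_pos : forall p, In p (primes_below (S n)) -> (0 < p)%nat.
  by move=> p /filter_In [_ /prime_gt0 /ssrnat.ltP].
rewrite -[X in X <= _]ln_exp exp_Rsum_list_ln // /= -ln_pow; last lra.
apply: ln_le; first by rewrite -exp_Rsum_list_ln //; apply: exp_pos.
rewrite (_ : 4 = INR 4) -?pow_INR; last by rewrite /=; lra.
by apply: le_INR; apply: Primorial.prod_primes_le_pow4.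
Qed.

Lemma INR_up x : 0 <= x -> INR (Z.to_nat (up x)) = IZR (up x).
Proof.
move=> x_ge0; have [up_gt _] := archimed x.
by rewrite INR_IZR_INZ Z2Nat.id //; apply: le_IZR; lra.
Qed.

(* Since x < up x <= x + 1, the primes p <= x are the primes below up x. *)
Lemma sum_primes_le_primes_below x f : 0 <= x ->
  sum_primes_le x f = Rsum_list f (primes_below (Z.to_nat (up x))).
Proof.
move=> x_ge0; have [up_gt up_le] := archimed x; have INR_N := INR_up x x_ge0.
set N := Z.to_nat (up x) in INR_N *.
rewrite /sum_primes_le /primes_below -/N seq_S filter_app /=.
destruct (Rle_dec (INR N) x) as [le_Nx | not_le_Nx].
  by exfalso; rewrite INR_N in le_Nx; lra.
rewrite Bool.andb_false_r app_nil_r; congr Rsum_list.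
apply: filter_ext_in => n /in_seq [_ lt_n].
destruct (Rle_dec (INR n) x) as [le_nx | not_le_nx]; first exact: Bool.andb_true_r.
have := le_INR _ _ lt_n; rewrite S_INR INR_N; lra.
Qed.

Lemma sum_primes_le_mono x f g : (forall p, prime p -> f p <= g p) ->
  sum_primes_le x f <= sum_primes_le x g.
Proof.
by move=> le_fg; apply: Rsum_list_le => p /filter_In [_ /andP [p_pr _]]; apply: le_fg.
Qed.

Lemma sum_primes_le_lin x c d f g :
  sum_primes_le x (fun p => c * f p + d * g p) = c * sum_primes_le x f + d * sum_primes_le x g.
Proof. exact: Rsum_list_lin. Qed.

Lemma inv_Rpower_pos u v : 0 < 1 / Rpower u v.
Proof. by apply: Rdiv_lt_0_compat; [lra | apply: exp_pos]. Qed.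

Lemma inv_Rpower_ln_prime_le a y p : 0 <= a -> 1 < y -> prime p ->
  1 / Rpower (ln (INR p)) a <=
  1 / Rpower (ln 2) a * (if Rle_dec (INR p) y then 1 else 0)
  + 1 / Rpower (ln y) (a + 1) * ln (INR p).
Proof.
move=> a_ge0 y_gt1 p_pr.
have p_ge2 : 2 <= INR p.
  have := le_INR 2 p; rewrite /=; apply; apply/ssrnat.ltP; exact: prime_gt1.
have ln2_pos : 0 < ln 2 by have := ln_lt_2; lra.
have lnp_ge : ln 2 <= ln (INR p) by apply: ln_le; lra.
have lny_pos : 0 < ln y by rewrite -ln_1; apply: ln_increasing; lra.
case: Rle_dec => [p_le_y | p_gt_y] /=.
- have : 0 <= 1 / Rpower (ln y) (a + 1) * ln (INR p).
    by apply: Rmult_le_pos; [exact: Rlt_le (inv_Rpower_pos _ _) | lra].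
  have : 1 / Rpower (ln (INR p)) a <= 1 / Rpower (ln 2) a.
    apply: Rmult_le_compat_l; first lra.
    by apply: Rinv_le_contravar; [apply: exp_pos | apply: Rle_Rpower_l; lra].
  lra.
- have pow_le : Rpower (ln y) (a + 1) <= Rpower (ln (INR p)) (a + 1).
    by apply: Rle_Rpower_l; [lra | split => //; apply: ln_le; lra].
  have lnp_pos : 0 < ln (INR p) by lra.
  have -> : 1 / Rpower (ln (INR p)) a = 1 / Rpower (ln (INR p)) (a + 1) * ln (INR p).
    have pow_pos : 0 < Rpower (ln (INR p)) a by apply: exp_pos.
    by rewrite Rpower_plus Rpower_1 //; field; lra.
  rewrite Rmult_0_r Rplus_0_l; apply: Rmult_le_compat_r; first lra.
  by apply: Rmult_le_compat_l; [lra | apply: Rinv_le_contravar => //; apply: exp_pos].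
Qed.

Lemma sum_primes_le_indicator x y : 0 <= y ->
  sum_primes_le x (fun p => if Rle_dec (INR p) y then 1 else 0) <= y.
Proof.
move=> y_ge0; apply: Rsum_list_indicator_le => // p /andP [p_pr _].
by apply/ssrnat.ltP; apply: prime_gt0.
Qed.

Lemma sum_primes_le_ln x : 0 <= x -> sum_primes_le x (fun p => ln (INR p)) <= x * ln 4.
Proof.
move=> x_ge0; have [_ up_le] := archimed x; have INR_N := INR_up x x_ge0.
have ln4_pos : 0 <= ln 4 by rewrite -ln_1; apply: ln_le; lra.
rewrite sum_primes_le_primes_below //.
apply: Rle_trans (Rsum_list_ln_primes_below_le _) _; apply: Rmult_le_compat_r => //.
move: INR_N; case: (Z.to_nat (up x)) => [|n] /=; first by lra.
by rewrite -/(INR (S n)) S_INR; lra.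
Qed.

Section SplitEstimate.
Variables a L : R.
Hypotheses (a_ge3 : 3 <= a) (L_pos : 0 < L).

Let log_rhs := a * ln (2 * a) + L - (a + 1) * ln L.

Lemma rhs_exp : Rpower (2 * a) a * (exp L / Rpower L (a + 1)) = exp log_rhs.
Proof.
rewrite /log_rhs /Rpower /Rminus !exp_plus exp_Ropp /Rdiv; ring.
Qed.

Lemma small_primes_term : 1 / Rpower (ln 2) a * exp (2/5 * L) <= 0.68 * exp log_rhs.
Proof.
have -> : 1 / Rpower (ln 2) a * exp (2/5 * L) = exp (2/5 * L - a * ln (ln 2)).
  by rewrite /Rpower /Rminus exp_plus exp_Ropp; field; apply: exp_neq_0.
apply: exp_le_mul_exp; first lra.
have [l2_ge l2_le] := ln2_bounds.
have l35_ge := ln_3_5_ge; have ll2_ge := ln_ln2_ge; have l068_ge := ln_0_68_ge.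
(* Maximising over L and using (1 + 1/a)^a <= e leaves an exponent that is
   linear in a with negative slope, so a = 3 is the worst case. *)
have max_L := mul_ln_le (a + 1) (3/5 * L) ltac:(lra) ltac:(lra).
rewrite ln_mult in max_L; try lra.
have ln_succ_le := mul_ln_le a (a + 1) ltac:(lra) ltac:(lra).
have ln_succ_lin := mul_ln_le 4 (a + 1) ltac:(lra) ltac:(lra).
have ln2a : ln (2 * a) = ln 2 + ln a by apply: ln_mult; lra.
have : 0 <= (a - 3) * (ln (3/5) + 1 + ln 2 + ln (ln 2) - 1/4) by apply: Rmult_le_pos; lra.
rewrite /log_rhs ln2a ln_4 in ln_succ_lin *.
lra.
Qed.

Lemma large_primes_term :
  1 / Rpower (2/5 * L) (a + 1) * (exp L * ln 4) <= 0.26 * exp log_rhs.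
Proof.
have -> : 1 / Rpower (2/5 * L) (a + 1) * (exp L * ln 4)
          = ln 4 * exp (L - (a + 1) * ln (2/5 * L)).
  by rewrite /Rpower /Rminus exp_plus exp_Ropp; field; apply: exp_neq_0.
have q_pos : 0 < / ((2/5) ^ 4 * 6 ^ 3) by apply: Rinv_0_lt_compat; lra.
have exp_le : exp (L - (a + 1) * ln (2/5 * L)) <= / ((2/5) ^ 4 * 6 ^ 3) * exp log_rhs.
  (* (5/2)^(a+1) / (2a)^a decreases in a, so its value at a = 3 bounds it. *)
  apply: exp_le_mul_exp => //.
  rewrite (ln_mult (2/5) L) ?ln_Rinv ?(ln_mult ((2/5) ^ 4)) ?ln_pow; try (simpl; lra).
  have ln_12_5 : 0 <= ln (2/5) + ln 6.
    by rewrite -ln_1 -ln_mult; try apply: ln_le; lra.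
  have ln_6 : ln 6 <= ln (2 * a) by apply: ln_le; lra.
  have : 0 <= (a - 3) * (ln (2/5) + ln 6) by apply: Rmult_le_pos; lra.
  have : 0 <= a * (ln (2 * a) - ln 6) by apply: Rmult_le_pos; lra.
  rewrite /log_rhs /=; lra.
have [l2_ge l2_le] := ln2_bounds.
have ln4_le : 0 <= ln 4 <= 1.4 by rewrite ln_4; lra.
have q_val : / ((2/5) ^ 4 * 6 ^ 3) = 625/3456 by rewrite /=; field.
rewrite q_val in exp_le.
apply: Rle_trans (Rmult_le_compat_l _ _ _ (proj1 ln4_le) exp_le) _.
have := exp_pos log_rhs; nra.
Qed.

Lemma split_estimate :
  1 / Rpower (ln 2) a * exp (2/5 * L) + 1 / Rpower (2/5 * L) (a + 1) * (exp L * ln 4)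
  < Rpower (2 * a) a * (exp L / Rpower L (a + 1)).
Proof.
rewrite rhs_exp; have := small_primes_term; have := large_primes_term.
have := exp_pos log_rhs; lra.
Qed.
End SplitEstimate.

Theorem lemma5 (alpha x : R) (halpha : 3 <= alpha) (hx : 1 < x) :
  sum_primes_le x (fun p => 1 / Rpower (ln (INR p)) alpha)
  < Rpower (2 * alpha) alpha * (x / Rpower (ln x) (alpha + 1)).
Proof.
set L := ln x; set y := exp (2/5 * L).
have L_pos : 0 < L by rewrite /L -ln_1; apply: ln_increasing; lra.
have y_gt1 : 1 < y by rewrite /y -exp_0; apply: exp_increasing; lra.
have ln_y : ln y = 2/5 * L by rewrite /y ln_exp.
have x_eq : exp L = x by rewrite /L exp_ln; lra.
have := split_estimate alpha L halpha L_pos; rewrite x_eq -/y -ln_y => estimate.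
apply: Rle_lt_trans _ _ _ _ estimate.
have alpha_ge0 : 0 <= alpha by lra.
apply: Rle_trans _ _ _
  (sum_primes_le_mono _ _ _ (fun p => inv_Rpower_ln_prime_le alpha y p alpha_ge0 y_gt1)) _.
rewrite (sum_primes_le_lin _ _ _ (fun p => if Rle_dec (INR p) y then 1 else 0)
                                 (fun p => ln (INR p))).
apply: Rplus_le_compat; apply: Rmult_le_compat_l.
- exact: Rlt_le (inv_Rpower_pos _ _).
- apply: sum_primes_le_indicator; lra.
- exact: Rlt_le (inv_Rpower_pos _ _).
- apply: sum_primes_le_ln; lra.
Qed.
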